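(* Let $\{A_k\}_{k\ge0}$ be a sequence of nonnegative reals with $A_0=0$ and $A_k=A_{k-1}+\sqrt{c_1^2+c_2A_{k-1}}$ for $k\ge1$, where $c_1>0$ and $c_2\ge0$. Let $K_0=\lceil\frac{c_2}{9c_1}\rceil$. Then $$A_k\ge\begin{cases}\frac{c_2}{9}\Big(k-K_0+\max\Big\{3\sqrt{\frac{c_1}{c_2}},1\Big\}\Big)^2,&\text{if }c_2>0\text{ and }k>K_0,\\ c_1k,&\text{otherwise.}\end{cases}$$ *)

From Stdlib Require Import Reals Lra Lia ZArith.
Open Scope R_scope.

Definition K0 (c1 c2 : R) : Z := Zceil (c2 / (9 * c1)).

From Stdlib Require Import Reals ZArith Lra Lia.
Open Scope R_scope.

(* Each step adds at least [c1], which gives the linear bound.  Once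
   [A >= c2/9 t^2] with [t >= 1], the increment is at least
   [sqrt (c2 * c2/9 t^2) = c2 t / 3 >= c2/9 (2 t + 1)], so the bound propagates
   from [t] to [t + 1].  At [k = K0] the linear bound [c1 K0] already dominates
   [c2/9 max(3 sqrt(c1/c2), 1)^2], which starts the quadratic phase. *)

Lemma sqrt_increment_ge (c1 c2 x : R) :
  0 <= c2 -> 0 <= x -> c1 <= sqrt (c1 ^ 2 + c2 * x).
Proof.
  intros Hc2 Hx.
  destruct (Rle_or_lt c1 0) as [Hc1 | Hc1].
  - pose proof (sqrt_pos (c1 ^ 2 + c2 * x)); lra.
  - rewrite <- (sqrt_pow2 c1) at 1 by lra.
    apply sqrt_le_1_alt; nra.
Qed.

Lemma quadratic_step (c1 c2 t x : R) :
  0 <= c2 -> 1 <= t -> c2 / 9 * t ^ 2 <= x ->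
  c2 / 9 * (t + 1) ^ 2 <= x + sqrt (c1 ^ 2 + c2 * x).
Proof.
  intros Hc2 Ht Hx.
  assert (Hroot : sqrt ((c2 * t / 3) ^ 2) <= sqrt (c1 ^ 2 + c2 * x)).
  { apply sqrt_le_1_alt. pose proof (pow2_ge_0 c1). nra. }
  rewrite sqrt_pow2 in Hroot by (apply Rmult_le_pos; [apply Rmult_le_pos|]; lra).
  assert (0 <= c2 * (t - 1)) by (apply Rmult_le_pos; lra).
  nra.
Qed.

Section Recursion.

Variables (c1 c2 : R) (A : nat -> R).
Hypothesis hc2 : 0 <= c2.
Hypothesis hrec : forall k : nat, A (S k) = A k + sqrt (c1 ^ 2 + c2 * A k).

Lemma rec_ge_linear :
  (forall k, 0 <= A k) -> A 0%nat = 0 -> forall k, c1 * INR k <= A k.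
Proof.
  intros hnn h0; induction k as [|k IH].
  - rewrite h0; simpl; lra.
  - rewrite hrec, S_INR.
    pose proof (sqrt_increment_ge c1 c2 (A k) hc2 (hnn k)); lra.
Qed.

Lemma rec_ge_quadratic (k0 : nat) (t : R) :
  1 <= t -> c2 / 9 * t ^ 2 <= A k0 ->
  forall j, c2 / 9 * (INR j + t) ^ 2 <= A (k0 + j).
Proof.
  intros Ht Hk0; induction j as [|j IH].
  - rewrite Nat.add_0_r; simpl INR; rewrite Rplus_0_l; exact Hk0.
  - rewrite Nat.add_succ_r, hrec, S_INR.
    replace (INR j + 1 + t) with ((INR j + t) + 1) by ring.
    apply quadratic_step; [exact hc2 | pose proof (pos_INR j); lra | exact IH].
Qed.

End Recursion.

Lemma K0_ge_1 (c1 c2 : R) : 0 < c1 -> 0 < c2 -> (1 <= K0 c1 c2)%Z.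
Proof.
  intros Hc1 Hc2.
  assert (Hpos : 0 < IZR (K0 c1 c2)).
  { eapply Rlt_le_trans; [| apply Zceil_bound].
    apply Rdiv_lt_0_compat; lra. }
  apply lt_IZR in Hpos; lia.
Qed.

Lemma K0_linear_ge_quadratic (c1 c2 : R) : 0 < c1 -> 0 < c2 ->
  c2 / 9 * Rmax (3 * sqrt (c1 / c2)) 1 ^ 2 <= c1 * IZR (K0 c1 c2).
Proof.
  intros Hc1 Hc2.
  assert (HK : c2 / (9 * c1) <= IZR (K0 c1 c2)) by apply Zceil_bound.
  assert (HK1 : 1 <= IZR (K0 c1 c2)) by (apply IZR_le, K0_ge_1; assumption).
  unfold Rmax; destruct (Rle_dec (3 * sqrt (c1 / c2)) 1).
  - apply Rmult_le_compat_l with (r := c1) in HK; [| lra].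
    replace (c1 * (c2 / (9 * c1))) with (c2 / 9) in HK by (field; lra).
    lra.
  - replace ((3 * sqrt (c1 / c2)) ^ 2) with (9 * sqrt (c1 / c2) ^ 2) by ring.
    rewrite pow2_sqrt by (apply Rlt_le, Rdiv_lt_0_compat; lra).
    replace (c2 / 9 * (9 * (c1 / c2))) with c1 by (field; lra).
    nra.
Qed.

Theorem lemma6 (c1 c2 : R) (A : nat -> R)
  (hc1 : 0 < c1) (hc2 : 0 <= c2)
  (hnn : forall k, 0 <= A k)
  (h0 : A 0%nat = 0)
  (hrec : forall k : nat, A (S k) = A k + sqrt (c1 ^ 2 + c2 * A k)) :
  forall k : nat,
    if Rlt_dec 0 c2 then
      if Z_lt_dec (K0 c1 c2) (Z.of_nat k) then
        A k >= c2 / 9 *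
          (INR k - IZR (K0 c1 c2) + Rmax (3 * sqrt (c1 / c2)) 1) ^ 2
      else A k >= c1 * INR k
    else A k >= c1 * INR k.
Proof.
  pose proof (rec_ge_linear c1 c2 A hc2 hrec hnn h0) as lin.
  intro k.
  destruct (Rlt_dec 0 c2) as [Hc2 | _]; [| apply Rle_ge, lin].
  destruct (Z_lt_dec (K0 c1 c2) (Z.of_nat k)) as [Hk | _]; [| apply Rle_ge, lin].
  pose proof (K0_ge_1 c1 c2 hc1 Hc2) as HK1.
  set (Kn := Z.to_nat (K0 c1 c2)).
  assert (HKn : IZR (K0 c1 c2) = INR Kn).
  { unfold Kn; rewrite INR_IZR_INZ, Z2Nat.id by lia; reflexivity. }
  assert (Hbase : c2 / 9 * Rmax (3 * sqrt (c1 / c2)) 1 ^ 2 <= A Kn).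
  { eapply Rle_trans; [apply K0_linear_ge_quadratic; assumption |].
    rewrite HKn; apply lin. }
  replace k with (Kn + (k - Kn))%nat at 1 2 by (unfold Kn; lia).
  rewrite plus_INR, <- HKn.
  replace (IZR (K0 c1 c2) + INR (k - Kn) - IZR (K0 c1 c2)) with (INR (k - Kn)) by ring.
  apply Rle_ge, (rec_ge_quadratic c1 c2 A hc2 hrec); [apply Rmax_r | exact Hbase].
Qed.
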